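(* The theory INT is equivalent to the theory FUN of normalized positive additive functionals on $R$: the interpretation sending $P(f)$ to $(0<I(f))$, together with the interpretation sending $(p<I(f))$ to $P(f-p)$ and $(I(f)<q)$ to $P(q-f)$, are mutually inverse interpretations between the two propositional geometric theories. In particular the points of INT correspond exactly to integrals on $R$.
   Context: $R$ is a Riesz space over $\mathbb{Q}$ with strong unit $1$ (for every $x$ there is $n$ with $-n1\le x\le n1$); rationals $r$ are identified with $r\cdot1$. INT is the propositional geometric theory with generators $P(f)$, $f\in R$, and relations: $P(1)=1$; $P(f)\wedge P(-f)=0$; $P(f+g)\le P(f)\vee P(g)$; $P(f)=0$ if $f\le0$; $P(f)=\bigvee_{s>0,\,s\in\mathbb{Q}}P(f-s)$. FUN is the propositional geometric theory with generators $(p<I(f))$ and $(I(f)<q)$ for $f\in R$, $p,q\in\mathbb{Q}$, with relations expressing that each $I(f)$ is a Dedekind real (namely: $(p<I(f))\le(p'<I(f))$ for $p'<p$; $(I(f)<q)\le(I(f)<q')$ for $q<q'$; $(p<I(f))=\bigvee_{p'>p}(p'<I(f))$; $(I(f)<q)=\bigvee_{q'<q}(I(f)<q')$; $1=(p<I(f))\vee(I(f)<q)$ for $p<q$; $0=(q<I(f))\wedge(I(f)<p)$ for $p<q$), and that $I(0)=0$, $I(f+g)=I(f)+I(g)$, $I(f)\ge0$ whenever $f\ge0$, and $I(1)=1$. An integral on $R$ is a positive linear functional $I:R\to\mathbb{R}$ with $I(1)=1$. *)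

From HB Require Import structures.
From mathcomp Require Import all_boot all_order all_algebra.
From Stdlib Require Import Reals ZArith.
Set Implicit Arguments. Unset Strict Implicit. Unset Printing Implicit Defensive.
Import Order.TTheory GRing.Theory Num.Theory.
Local Open Scope ring_scope.

(* A frame is presented as a preorder with top, bottom, binary meets,  *)
(* joins of arbitrary subsets and infinite distributivity; equality in *)
(* the frame is the induced equivalence [feq].                         *)
Record frame := Frame {
  fcar :> Type;
  fle : fcar -> fcar -> Prop;
  ftop : fcar;
  fbot : fcar;
  fmeet : fcar -> fcar -> fcar;
  fsup : (fcar -> Prop) -> fcar;
  fle_refl : forall a, fle a a;
  fle_trans : forall a b c, fle a b -> fle b c -> fle a c;
  ftop_max : forall a, fle a ftop;
  fbot_min : forall a, fle fbot a;
  fmeet_l : forall a b, fle (fmeet a b) a;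
  fmeet_r : forall a b, fle (fmeet a b) b;
  fmeet_glb : forall a b c, fle c a -> fle c b -> fle c (fmeet a b);
  fsup_ub : forall (S : fcar -> Prop) a, S a -> fle a (fsup S);
  fsup_lub : forall (S : fcar -> Prop) c, (forall a, S a -> fle a c) -> fle (fsup S) c;
  fdistr : forall a (S : fcar -> Prop),
    fle (fmeet a (fsup S)) (fsup (fun x => exists b, S b /\ x = fmeet a b))
}.

Definition feq (L : frame) (a b : L) : Prop := fle a b /\ fle b a.
Definition supfam (L : frame) (I : Type) (F : I -> L) : L :=
  fsup (fun x => exists i, x = F i).
Definition fjoin (L : frame) (a b : L) : L := fsup (fun x => x = a \/ x = b).
Definition fbool (L : frame) (b : bool) : L := if b then ftop L else fbot L.

(* The frame of truth values (used for points). *)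
Definition PropFrame : frame.
Proof.
refine (@Frame Prop (fun a b => a -> b) True False and
  (fun S => exists a, S a /\ a) _ _ _ _ _ _ _ _ _ _).
- tauto.
- tauto.
- tauto.
- tauto.
- tauto.
- tauto.
- tauto.
- intros S a Sa Ha; exists a; tauto.
- intros S c H [a [Sa Ha]]; exact (H a Sa Ha).
- intros a S [Ha [b [Sb Hb]]]; exists (a /\ b); split; [exists b; tauto | tauto].
Defined.

Definition is_riesz (V : lmodType rat) (le : V -> V -> Prop) : Prop :=
  (forall x, le x x) /\
  (forall x y z, le x y -> le y z -> le x z) /\
  (forall x y, le x y -> le y x -> x = y) /\
  (forall x y z, le x y -> le (x + z) (y + z)) /\
  (forall (r : rat) x y, 0 <= r -> le x y -> le (r *: x) (r *: y)) /\
  (forall x y, exists z, le x z /\ le y z /\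
      forall w, le x w -> le y w -> le z w).

Definition strong_unit (V : lmodType rat) (le : V -> V -> Prop) (u : V) : Prop :=
  forall x, exists n : nat, le (- (n%:R *: u)) x /\ le x (n%:R *: u).

(* Models of INT in a frame L: P : V -> L.  Rational r is r *: u.      *)
Definition INT_model (V : lmodType rat) (le : V -> V -> Prop) (u : V)
    (L : frame) (P : V -> L) : Prop :=
  feq (P u) (ftop L) /\
  (forall f, feq (fmeet (P f) (P (- f))) (fbot L)) /\
  (forall f g, fle (P (f + g)) (fjoin (P f) (P g))) /\
  (forall f, le f 0 -> feq (P f) (fbot L)) /\
  (forall f, feq (P f)
     (supfam (fun s : {s : rat | 0 < s} => P (f - (sval s) *: u)))).

(* Models of FUN in a frame L: Lo f p is (p < I(f)), Up f q is (I(f) < q). *)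
Definition FUN_model (V : lmodType rat) (le : V -> V -> Prop) (u : V)
    (L : frame) (Lo Up : V -> rat -> L) : Prop :=
  (* each I(f) is a Dedekind real *)
  (forall f (p p' : rat), p' < p -> fle (Lo f p) (Lo f p')) /\
  (forall f (q q' : rat), q < q' -> fle (Up f q) (Up f q')) /\
  (forall f p, feq (Lo f p)
     (supfam (fun p' : {p' : rat | p < p'} => Lo f (sval p')))) /\
  (forall f q, feq (Up f q)
     (supfam (fun q' : {q' : rat | q' < q} => Up f (sval q')))) /\
  (forall f (p q : rat), p < q -> feq (ftop L) (fjoin (Lo f p) (Up f q))) /\
  (forall f (p q : rat), p < q -> feq (fbot L) (fmeet (Lo f q) (Up f p))) /\
  (* I(0) = 0 *)
  (forall p : rat, feq (Lo 0 p) (fbool L (p < 0))) /\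
  (forall q : rat, feq (Up 0 q) (fbool L (0 < q))) /\
  (* I(f+g) = I(f) + I(g), as Dedekind reals *)
  (forall f g (r : rat), feq (Lo (f + g) r)
     (supfam (fun pq : {pq : rat * rat | pq.1 + pq.2 = r} =>
        fmeet (Lo f (sval pq).1) (Lo g (sval pq).2)))) /\
  (forall f g (s : rat), feq (Up (f + g) s)
     (supfam (fun pq : {pq : rat * rat | pq.1 + pq.2 = s} =>
        fmeet (Up f (sval pq).1) (Up g (sval pq).2)))) /\
  (* I(f) >= 0 whenever f >= 0, i.e. (I(f) < 0) = 0 *)
  (forall f, le 0 f -> feq (Up f 0) (fbot L)) /\
  (* I(1) = 1 *)
  (forall p : rat, feq (Lo u p) (fbool L (p < 1))) /\
  (forall q : rat, feq (Up u q) (fbool L (1 < q))).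

Definition INT_to_FUN_Lo (V : lmodType rat) (u : V) (L : frame) (P : V -> L)
  : V -> rat -> L := fun f p => P (f - p *: u).
Definition INT_to_FUN_Up (V : lmodType rat) (u : V) (L : frame) (P : V -> L)
  : V -> rat -> L := fun f q => P (q *: u - f).
Definition FUN_to_INT (V : lmodType rat) (L : frame) (Lo : V -> rat -> L)
  : V -> L := fun f => Lo f 0.

Definition int_to_Z (z : int) : Z :=
  match z with
  | Posz n => Z.of_nat n
  | Negz n => Z.opp (Z.of_nat n.+1)
  end.
Definition rat_to_R (r : rat) : R :=
  Rdiv (IZR (int_to_Z (numq r))) (IZR (int_to_Z (denq r))).

Definition is_integral (V : lmodType rat) (le : V -> V -> Prop) (u : V)
    (I : V -> R) : Prop :=
  (forall f g, I (f + g) = Rplus (I f) (I g)) /\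
  (forall (r : rat) f, I (r *: f) = Rmult (rat_to_R r) (I f)) /\
  (forall f, le 0 f -> Rle 0%R (I f)) /\
  I u = 1%R.

(* - In any model P of INT we first derive monotonicity, P f /\ P g <= P (f+g),
     the values P (r u) = [0 < r], and the key locatedness of sums
     (P_located), proved by cutting the rational line into small steps.  These
     show that (p < I f) := P (f - p), (I f < q) := P (q - f) is a FUN model.
   - In any FUN model, additivity and I u = 1 compute the value of every
     constant r u, which gives translation invariance (Lo_shift); from it,
     P f := (0 < I f) is an INT model, and the two interpretations are inverse.
   - For points (models in the frame of propositions) the Dedekind cut
     {q | P (f - q)} defines a real number; this yields an integral, integrals
     are determined by their positivity predicate, and that predicate is a
     point of INT. *)

From HB Require Import structures.
From mathcomp Require Import all_boot all_order all_algebra.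
From Stdlib Require Import Reals Classical.
From mathcomp Require Import ring lra classical_sets Rstruct reals.
Import Order.TTheory GRing.Theory Num.Theory.
Set Implicit Arguments. Unset Strict Implicit. Unset Printing Implicit Defensive.
Local Open Scope ring_scope.

Section FrameFacts.
Variable L : frame.
Implicit Types a b c d x : L.

Lemma fjoin_l a b : fle a (fjoin a b).
Proof. by apply: fsup_ub; left. Qed.

Lemma fjoin_r a b : fle b (fjoin a b).
Proof. by apply: fsup_ub; right. Qed.

Lemma fjoin_lub a b c : fle a c -> fle b c -> fle (fjoin a b) c.
Proof. by move=> ac bc; apply: fsup_lub => x [->|->]. Qed.

Lemma fjoin_comm a b : fle (fjoin a b) (fjoin b a).
Proof. exact: fjoin_lub (fjoin_r _ _) (fjoin_l _ _). Qed.

Lemma supfam_ub (I : Type) (F : I -> L) i : fle (F i) (supfam F).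
Proof. by apply: fsup_ub; exists i. Qed.

Lemma supfam_ge (I : Type) (F : I -> L) i a : fle a (F i) -> fle a (supfam F).
Proof. by move=> aF; apply: fle_trans aF (supfam_ub _ _). Qed.

Lemma supfam_lub (I : Type) (F : I -> L) c :
  (forall i, fle (F i) c) -> fle (supfam F) c.
Proof. by move=> Fc; apply: fsup_lub => x [i ->]. Qed.

Lemma fmeet_mono a b c d : fle a c -> fle b d -> fle (fmeet a b) (fmeet c d).
Proof.
move=> ac bd; apply: fmeet_glb.
- exact: fle_trans (fmeet_l _ _) ac.
- exact: fle_trans (fmeet_r _ _) bd.
Qed.

Lemma fmeet_join_distr a b c :
  fle (fmeet a (fjoin b c)) (fjoin (fmeet a b) (fmeet a c)).
Proof.
apply: fle_trans (fdistr _ _) _.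
by apply: fsup_lub => x [y [[->|->] ->]]; [exact: fjoin_l | exact: fjoin_r].
Qed.

Lemma fle_join_cases x a b c :
  fle x (fjoin a b) -> fle (fmeet x a) c -> fle (fmeet x b) c -> fle x c.
Proof.
move=> xab xac xbc.
have x_xab : fle x (fmeet x (fjoin a b)) by apply: fmeet_glb => //; exact: fle_refl.
apply: fle_trans x_xab _; apply: fle_trans (fmeet_join_distr _ _ _) _.
exact: fjoin_lub.
Qed.

Lemma fle_join_elim x a b :
  fle x (fjoin a b) -> fle (fmeet x b) (fbot L) -> fle x a.
Proof.
move=> xab xb; apply: fle_join_cases xab (fmeet_r _ _) _.
exact: fle_trans xb (fbot_min _).
Qed.

Lemma feq_refl a : feq a a.
Proof. by split; apply: fle_refl. Qed.

Lemma feq_sym a b : feq a b -> feq b a.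
Proof. by case. Qed.

Lemma feq_trans a b c : feq a b -> feq b c -> feq a c.
Proof. by case=> ab ba [bc cb]; split; [exact: fle_trans ab bc | exact: fle_trans cb ba]. Qed.

Lemma feq_top a : fle (ftop L) a -> feq a (ftop L).
Proof. by split => //; apply: ftop_max. Qed.

Lemma feq_bot a : fle a (fbot L) -> feq a (fbot L).
Proof. by split => //; apply: fbot_min. Qed.

Lemma feq_fbool (b : bool) a :
  (b -> fle (ftop L) a) -> (~~ b -> fle a (fbot L)) -> feq a (fbool L b).
Proof.
by case: b => [a_top _ | _ a_bot]; [apply: feq_top; apply: a_top | apply: feq_bot; apply: a_bot].
Qed.

Lemma supfam_feq (I : Type) (F G : I -> L) :
  (forall i, feq (F i) (G i)) -> feq (supfam F) (supfam G).
Proof.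
move=> FG; split; apply: supfam_lub => i.
- exact: fle_trans (proj1 (FG i)) (supfam_ub _ _).
- exact: fle_trans (proj2 (FG i)) (supfam_ub _ _).
Qed.

Lemma chain_cover x S (A B : nat -> L) :
  fle (ftop L) (A 0%N) -> (forall k, fle x (fjoin (A k.+1) (B k))) ->
  (forall k, fle (fmeet (A k) (B k)) S) -> forall j, fle x (fjoin S (A j)).
Proof.
move=> A0 xAB ABS; elim=> [|j IH].
  exact: fle_trans (ftop_max _) (fle_trans A0 (fjoin_r _ _)).
apply: fle_join_cases IH _ _; first exact: fle_trans (fmeet_r _ _) (fjoin_l _ _).
have xA : fle (fmeet x (A j)) (fmeet (A j) (fjoin (A j.+1) (B j))).
  by apply: fmeet_glb; [exact: fmeet_r | exact: fle_trans (fmeet_l _ _) (xAB j)].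
apply: fle_trans xA _; apply: fle_trans (fmeet_join_distr _ _ _) _.
apply: fjoin_lub.
- exact: fle_trans (fmeet_r _ _) (fjoin_r _ _).
- exact: fle_trans (ABS j) (fjoin_l _ _).
Qed.

End FrameFacts.

Section RieszOrder.
Variables (V : lmodType rat) (le : V -> V -> Prop).
Hypothesis HR : is_riesz le.

Lemma rle_trans x y z : le x y -> le y z -> le x z.
Proof. by case: HR => _ [le_tr _]; apply: le_tr. Qed.

Lemma rle_addr x y z : le x y -> le (x + z) (y + z).
Proof. by case: HR => _ [_ [_ [le_add _]]]; apply: le_add. Qed.

Lemma rle_scale (r : rat) x y : 0 <= r -> le x y -> le (r *: x) (r *: y).
Proof. by case: HR => _ [_ [_ [_ [le_sc _]]]]; apply: le_sc. Qed.

Lemma rle_subr0 x y : le x y <-> le (x - y) 0.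
Proof.
split=> [xy | xy0]; first by rewrite -(subrr y); apply: rle_addr.
by rewrite -(subrK y x) -[y in le _ y]add0r; apply: rle_addr.
Qed.

Lemma rle_0subr x y : le x y <-> le 0 (y - x).
Proof.
split=> [xy | xy0]; first by rewrite -(subrr x); apply: rle_addr.
by rewrite -(subrK x y) -[x in le x _]add0r; apply: rle_addr.
Qed.

Variable u : V.
Hypothesis Hu : strong_unit le u.

(* The strong unit is positive: from -(n u) <= u we get 0 <= (n+1) u. *)
Lemma rle0_unit : le 0 u.
Proof.
have [n [Nnu _]] := Hu u.
move/rle_0subr: Nnu; rewrite opprK -[u in u + _]scale1r -scalerDl => n1u.
have n1_gt0 : 0 < (1 + n%:R : rat) by rewrite ltr_wpDr.
have n1V_ge0 : 0 <= (1 + n%:R : rat)^-1 by rewrite invr_ge0 ltW.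
have := rle_scale n1V_ge0 n1u.
by rewrite scaler0 scalerA mulVf ?scale1r // gt_eqF.
Qed.

Lemma rle0_unit_scale (r : rat) : 0 <= r -> le 0 (r *: u).
Proof. by move=> r_ge0; rewrite -(scaler0 _ r); apply: rle_scale rle0_unit. Qed.

Lemma rle_shift x (p q : rat) : p <= q -> le (x - q *: u) (x - p *: u).
Proof.
move=> pq; apply/rle_0subr.
by rewrite opprB addrC addrA subrK -scalerBl; apply: rle0_unit_scale; rewrite subr_ge0.
Qed.

Lemma rle_shift_opp x (p q : rat) : p <= q -> le (p *: u - x) (q *: u - x).
Proof.
move=> pq; apply/rle_0subr.
by rewrite opprB addrA subrK -scalerBl; apply: rle0_unit_scale; rewrite subr_ge0.
Qed.

End RieszOrder.

Lemma rat_archimedean (x s : rat) : 0 < s -> exists N : nat, x <= N%:R * s.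
Proof.
move=> s_gt0; have xs_ge0 : 0 <= `|x| / s by rewrite divr_ge0 // ltW.
exists (Num.Def.archi_bound (`|x| / s)).
rewrite (le_trans (ler_norm x)) // -ler_pdivrMr // ltW //.
exact: archi_boundP.
Qed.

Lemma rat_pos_frac (c : rat) : 0 < c -> exists m n : nat, c * n.+1%:R = m.+1%:R.
Proof.
rewrite -numq_gt0 => num_gt0; have := numqE c; have := denq_gt0 c.
by case: (numq c) num_gt0 => [[|m]|] //; case: (denq c) => [[|n]|] // _ _ E; exists m, n.
Qed.

Lemma shift_add (V : lmodType rat) (u f g : V) (a b : rat) :
  (f - a *: u) + (g - b *: u) = f + g - (a + b) *: u.
Proof. by rewrite scalerDl opprD addrACA. Qed.

Lemma shift_shift (V : lmodType rat) (u f : V) (a b : rat) :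
  f - a *: u - b *: u = f - (a + b) *: u.
Proof. by rewrite scalerDl opprD addrA. Qed.

Section IntModel.
Variables (V : lmodType rat) (le : V -> V -> Prop) (u : V).
Hypotheses (HR : is_riesz le) (Hu : strong_unit le u).
Variables (L : frame) (P : V -> L).
Hypothesis HP : INT_model le u P.

Lemma P_unit : fle (ftop L) (P u).
Proof. by case: HP => -[]. Qed.

Lemma P_disjoint f : fle (fmeet (P f) (P (- f))) (fbot L).
Proof. by case: HP => _ [/(_ f) []]. Qed.

Lemma P_subadd f g : fle (P (f + g)) (fjoin (P f) (P g)).
Proof. by case: HP => _ [_ []]. Qed.

Lemma P_nonpos f : le f 0 -> fle (P f) (fbot L).
Proof. by case: HP => _ [_ [_ [P0 _]]] /P0 []. Qed.

Lemma P_rounded f :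
  feq (P f) (supfam (fun s : {s : rat | 0 < s} => P (f - sval s *: u))).
Proof. by case: HP => _ [_ [_ [_]]]. Qed.

Lemma P_mono f g : le f g -> fle (P f) (P g).
Proof.
move=> fg; have -> : f = g + (f - g) by rewrite addrC subrK.
apply: fle_trans (P_subadd _ _) _; apply: fjoin_lub; first exact: fle_refl.
by apply: fle_trans _ (fbot_min _); apply: P_nonpos; apply: (rle_subr0 HR _ _).1.
Qed.

Lemma P_meet f g : fle (fmeet (P f) (P g)) (P (f + g)).
Proof.
apply: (@fle_join_elim _ _ _ (P (- g))).
  by apply: fle_trans (fmeet_l _ _) _; rewrite -{1}(addrK g f); apply: P_subadd.
by apply: fle_trans (P_disjoint g); apply: fmeet_mono (fmeet_r _ _) (fle_refl _).
Qed.

Lemma P_mulSn (k : nat) f : fle (P (k.+1%:R *: f)) (P f).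
Proof.
elim: k => [|k IH]; first by rewrite scale1r; apply: fle_refl.
rewrite -[k.+2]addn1 natrD scalerDl scale1r.
by apply: fle_trans (P_subadd _ _) _; apply: fjoin_lub IH (fle_refl _).
Qed.

Lemma P_const (r : rat) : feq (P (r *: u)) (fbool L (0 < r)).
Proof.
apply: feq_fbool => [r_gt0 | r_le0].
- have [m [n rnm]] := rat_pos_frac r_gt0.
  apply: fle_trans P_unit (fle_trans _ (P_mulSn n _)).
  rewrite scalerA mulrC rnm; apply: P_mono; apply: (rle_0subr HR _ _).2.
  rewrite -[u in _ - u]scale1r -scalerBl; apply: (rle0_unit_scale HR Hu).
  by rewrite subr_ge0 ler1n.
- apply: P_nonpos; apply: (rle_0subr HR _ _).2; rewrite sub0r -scaleNr.
  by apply: (rle0_unit_scale HR Hu); rewrite oppr_ge0 leNgt.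
Qed.

(* The strong unit bounds every f: P (f - p) is true for p small enough and
   false for p large enough. *)
Lemma P_top_below f : exists p : rat, fle (ftop L) (P (f - p *: u)).
Proof.
have [n [Nnf _]] := Hu f; exists (- (n%:R + 1)).
apply: fle_trans P_unit (P_mono _); apply: (rle_0subr HR _ _).2.
have -> : f - - (n%:R + 1) *: u - u = f - - (n%:R *: u).
  by rewrite scaleNr !opprK scalerDl scale1r addrA addrK.
exact: (rle_0subr HR _ _).1.
Qed.

Lemma P_bot_above f :
  exists q : rat, forall q', q <= q' -> fle (P (f - q' *: u)) (fbot L).
Proof.
have [n [_ fn]] := Hu f; exists n%:R => q' nq'; apply: P_nonpos.
exact (rle_trans HR (rle_shift HR Hu f nq') ((rle_subr0 HR _ _).1 fn)).
Qed.

(* Cut the line into steps of size s: P (f + g - r - s) is covered by the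
   pairs (f > p (k+1)) \/ (g > r - p k), and a chain argument concludes. *)
Lemma P_located f g (r : rat) :
  fle (P (f + g - r *: u))
    (supfam (fun pq : {pq : rat * rat | pq.1 + pq.2 = r} =>
        fmeet (P (f - (sval pq).1 *: u)) (P (g - (sval pq).2 *: u)))).
Proof.
set S := supfam _.
apply: fle_trans (proj1 (P_rounded _)) _; apply: supfam_lub => -[s /= s_gt0].
have [p0 top_p0] := P_top_below f.
have [q0 bot_q0] := P_bot_above f.
have [N q0_le] := rat_archimedean (q0 - p0) s_gt0.
pose p k : rat := p0 + k%:R * s.
pose A k := P (f - p k *: u).
pose B k := P (g - (r - p k) *: u).
have A0 : fle (ftop L) (A 0%N) by rewrite /A /p mul0r addr0.
have cover k : fle (P (f + g - r *: u - s *: u)) (fjoin (A k.+1) (B k)).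
  rewrite /A /B shift_shift; apply: fle_trans _ (P_subadd _ _); rewrite shift_add.
  have -> : p k.+1 + (r - p k) = r + s by rewrite /p -natr1; ring.
  exact: fle_refl.
have AB_S k : fle (fmeet (A k) (B k)) S.
  have e : (p k, r - p k).1 + (p k, r - p k).2 = r by rewrite /= addrC subrK.
  exact: (supfam_ub _ (exist _ (p k, r - p k) e)).
apply: fle_trans (chain_cover A0 cover AB_S N) _.
apply: fjoin_lub; first exact: fle_refl.
by apply: fle_trans (bot_q0 _ _) (fbot_min _); rewrite /p; lra.
Qed.


Lemma P_shift_rounded f (p : rat) : feq (P (f - p *: u))
  (supfam (fun p' : {p' : rat | p < p'} => P (f - sval p' *: u))).
Proof.
split.
- apply: fle_trans (proj1 (P_rounded _)) _; apply: supfam_lub => -[s s_gt0] /=.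
  have p_lt : p < p + s by rewrite ltrDl.
  by apply: (supfam_ge (i := exist _ (p + s) p_lt)); rewrite shift_shift; apply: fle_refl.
- apply: supfam_lub => -[p' pp'] /=; apply: fle_trans _ (proj2 (P_rounded _)).
  have s_gt0 : 0 < p' - p by rewrite subr_gt0.
  apply: (supfam_ge (i := exist _ (p' - p) s_gt0)) => /=.
  by rewrite shift_shift subrKC; apply: fle_refl.
Qed.

Lemma P_shift_opp_rounded f (q : rat) : feq (P (q *: u - f))
  (supfam (fun q' : {q' : rat | q' < q} => P (sval q' *: u - f))).
Proof.
split.
- apply: fle_trans (proj1 (P_rounded _)) _; apply: supfam_lub => -[s s_gt0] /=.
  have q_gt : q - s < q by rewrite gtrBl.
  apply: (supfam_ge (i := exist _ (q - s) q_gt)) => /=.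
  by rewrite addrAC -scalerBl; apply: fle_refl.
- apply: supfam_lub => -[q' q'q] /=; apply: fle_trans _ (proj2 (P_rounded _)).
  have s_gt0 : 0 < q - q' by rewrite subr_gt0.
  apply: (supfam_ge (i := exist _ (q - q') s_gt0)) => /=.
  by rewrite addrAC -scalerBl subKr; apply: fle_refl.
Qed.

Lemma P_shift_add f g (r : rat) : feq (P (f + g - r *: u))
  (supfam (fun pq : {pq : rat * rat | pq.1 + pq.2 = r} =>
     fmeet (P (f - (sval pq).1 *: u)) (P (g - (sval pq).2 *: u)))).
Proof.
split; first exact: P_located.
apply: supfam_lub => -[[a b] /= ab_r]; apply: fle_trans (P_meet _ _) _.
by rewrite shift_add ab_r; apply: fle_refl.
Qed.

Lemma P_shift_opp_add f g (s : rat) : feq (P (s *: u - (f + g)))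
  (supfam (fun pq : {pq : rat * rat | pq.1 + pq.2 = s} =>
     fmeet (P ((sval pq).1 *: u - f)) (P ((sval pq).2 *: u - g)))).
Proof.
split.
- have -> : s *: u - (f + g) = (- f) + (- g) - (- s) *: u
    by rewrite scaleNr opprK opprD addrC.
  apply: fle_trans (P_located _ _ _) _; apply: supfam_lub => -[[a b] /= ab_s].
  have e : (- a, - b).1 + (- a, - b).2 = s by rewrite /= -opprD ab_s opprK.
  apply: (supfam_ge (i := exist _ (- a, - b) e)) => /=.
  by rewrite !scaleNr (addrC (- (a *: u))) (addrC (- (b *: u))); apply: fle_refl.
- apply: supfam_lub => -[[a b] /= ab_s]; apply: fle_trans (P_meet _ _) _.
  by rewrite addrACA -opprD -scalerDl ab_s; apply: fle_refl.
Qed.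

Lemma INT_FUN : FUN_model le u (INT_to_FUN_Lo u P) (INT_to_FUN_Up u P).
Proof.
have cut_sum f (a b : rat) : (f - a *: u) + (b *: u - f) = (b - a) *: u.
  by rewrite addrC addrA subrK -scalerBl.
rewrite /FUN_model /INT_to_FUN_Lo /INT_to_FUN_Up.
split; first by move=> f p p' p'p; apply: P_mono; exact (rle_shift HR Hu f (ltW p'p)).
split; first by move=> f q q' qq'; apply: P_mono; exact (rle_shift_opp HR Hu f (ltW qq')).
split; first exact: P_shift_rounded.
split; first exact: P_shift_opp_rounded.
split.
  move=> f p q pq; split; last exact: ftop_max.
  have [_ qp_top] := P_const (q - p); rewrite subr_gt0 pq in qp_top.
  by apply: fle_trans qp_top _; rewrite -(cut_sum f p q); apply: P_subadd.
split.
  move=> f p q pq; split; first exact: fbot_min.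
  have [pq_bot _] := P_const (p - q); rewrite subr_gt0 ltNge (ltW pq) in pq_bot.
  by apply: fle_trans (P_meet _ _) _; rewrite cut_sum.
split; first by move=> p; rewrite sub0r -scaleNr -oppr_gt0; apply: P_const.
split; first by move=> q; rewrite subr0; apply: P_const.
split; first exact: P_shift_add.
split; first exact: P_shift_opp_add.
split.
  move=> f f_ge0; rewrite scale0r sub0r; apply: feq_bot; apply: P_nonpos.
  by move: (rle_addr HR (- f) f_ge0); rewrite add0r subrr.
split.
  by move=> p; rewrite -[u in u - _]scale1r -scalerBl -subr_gt0; apply: P_const.
by move=> q; rewrite -[u in _ - u]scale1r -scalerBl -subr_gt0; apply: P_const.
Qed.

Lemma INT_roundtrip f : feq (FUN_to_INT (INT_to_FUN_Lo u P) f) (P f).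
Proof. by rewrite /FUN_to_INT /INT_to_FUN_Lo scale0r subr0; apply: feq_refl. Qed.

End IntModel.

Section FunModel.
Variables (V : lmodType rat) (le : V -> V -> Prop) (u : V).
Variables (L : frame) (Lo Up : V -> rat -> L).
Hypothesis H : FUN_model le u Lo Up.

Lemma Lo_anti f (p p' : rat) : p' < p -> fle (Lo f p) (Lo f p').
Proof. by case: H => Lo_a _; apply: Lo_a. Qed.

Lemma Lo_rounded f (p : rat) :
  feq (Lo f p) (supfam (fun p' : {p' : rat | p < p'} => Lo f (sval p'))).
Proof. by case: H => _ [_ []]. Qed.

Lemma Up_rounded f (q : rat) :
  feq (Up f q) (supfam (fun q' : {q' : rat | q' < q} => Up f (sval q'))).
Proof. by case: H => _ [_ [_ []]]. Qed.

Lemma FUN_located f (p q : rat) : p < q -> fle (ftop L) (fjoin (Lo f p) (Up f q)).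
Proof. by case: H => _ [_ [_ [_ [loc _]]]] /(loc f) []. Qed.

Lemma FUN_disjoint f (p q : rat) : p < q -> fle (fmeet (Lo f q) (Up f p)) (fbot L).
Proof. by case: H => _ [_ [_ [_ [_ [disj _]]]]] /(disj f) []. Qed.

Lemma Lo_zero (p : rat) : feq (Lo 0 p) (fbool L (p < 0)).
Proof. by case: H => _ [_ [_ [_ [_ [_ []]]]]]. Qed.

Lemma Up_zero (q : rat) : feq (Up 0 q) (fbool L (0 < q)).
Proof. by case: H => _ [_ [_ [_ [_ [_ [_ []]]]]]]. Qed.

Lemma Lo_add f g (r : rat) : feq (Lo (f + g) r)
  (supfam (fun pq : {pq : rat * rat | pq.1 + pq.2 = r} =>
     fmeet (Lo f (sval pq).1) (Lo g (sval pq).2))).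
Proof. by case: H => _ [_ [_ [_ [_ [_ [_ [_ []]]]]]]]. Qed.

Lemma Up_add f g (s : rat) : feq (Up (f + g) s)
  (supfam (fun pq : {pq : rat * rat | pq.1 + pq.2 = s} =>
     fmeet (Up f (sval pq).1) (Up g (sval pq).2))).
Proof. by case: H => _ [_ [_ [_ [_ [_ [_ [_ [_ []]]]]]]]]. Qed.

Lemma Up_pos f : le 0 f -> fle (Up f 0) (fbot L).
Proof. by case: H => _ [_ [_ [_ [_ [_ [_ [_ [_ [_ [pos _]]]]]]]]]] /pos []. Qed.

Lemma Lo_unit (p : rat) : feq (Lo u p) (fbool L (p < 1)).
Proof. by case: H => _ [_ [_ [_ [_ [_ [_ [_ [_ [_ [_ []]]]]]]]]]]. Qed.

Lemma Up_unit (q : rat) : feq (Up u q) (fbool L (1 < q)).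
Proof. by case: H => _ [_ [_ [_ [_ [_ [_ [_ [_ [_ [_ []]]]]]]]]]]. Qed.

Lemma Lo_le f (p p' : rat) : p' <= p -> fle (Lo f p) (Lo f p').
Proof. by rewrite le_eqVlt => /predU1P [->|]; [apply: fle_refl | apply: Lo_anti]. Qed.

Lemma Lo_meet_add f g (a b : rat) :
  fle (fmeet (Lo f a) (Lo g b)) (Lo (f + g) (a + b)).
Proof.
apply: fle_trans _ (proj2 (Lo_add f g (a + b))).
by apply: (supfam_ge (i := exist _ (a, b) erefl)); apply: fle_refl.
Qed.

Lemma Up_meet_add f g (a b : rat) :
  fle (fmeet (Up f a) (Up g b)) (Up (f + g) (a + b)).
Proof.
apply: fle_trans _ (proj2 (Up_add f g (a + b))).
by apply: (supfam_ge (i := exist _ (a, b) erefl)); apply: fle_refl.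
Qed.

(* I (- v) = - I v: each side is the complement of the other, as cuts. *)
Lemma Lo_opp v (b : rat) : feq (Lo (- v) b) (Up v (- b)).
Proof.
split.
- apply: fle_trans (proj1 (Lo_rounded _ _)) _; apply: supfam_lub => -[b' bb'] /=.
  have nb' : - b' < - b by rewrite ltrN2.
  apply: (fle_join_elim (b := Lo v (- b'))).
    exact: fle_trans (ftop_max _) (fle_trans (FUN_located v nb') (fjoin_comm _ _)).
  apply: fle_trans (Lo_meet_add _ _ _ _) _.
  by rewrite addNr addrN; apply: (proj1 (Lo_zero 0)).
- apply: fle_trans (proj1 (Up_rounded _ _)) _; apply: supfam_lub => -[q qb] /=.
  have bq : b < - q by rewrite ltrNr.
  apply: (fle_join_elim (b := Up (- v) (- q))).
    exact: fle_trans (ftop_max _) (FUN_located _ bq).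
  apply: fle_trans (Up_meet_add _ _ _ _) _.
  by rewrite !addrN; apply: (proj1 (Up_zero 0)).
Qed.

Lemma Lo_mulSn (k : nat) v (b : rat) : fle (Lo v b) (Lo (k.+1%:R *: v) (k.+1%:R * b)).
Proof.
elim: k => [|k IH]; first by rewrite scale1r mul1r; apply: fle_refl.
rewrite -[k.+2]addn1 natrD scalerDl mulrDl scale1r mul1r.
by apply: fle_trans (Lo_meet_add _ _ _ _); apply: fmeet_glb => //; apply: fle_refl.
Qed.

Lemma Up_mulSn (k : nat) v (b : rat) : fle (Up v b) (Up (k.+1%:R *: v) (k.+1%:R * b)).
Proof.
have := proj2 (Lo_opp v (- b)); rewrite opprK => Up_Lo; apply: fle_trans Up_Lo _.
apply: fle_trans (Lo_mulSn k _ _) _.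
rewrite scalerN mulrN.
by have := proj1 (Lo_opp (k.+1%:R *: v) (- (k.+1%:R * b))); rewrite opprK.
Qed.

Lemma Lo_bot_above v (c : rat) :
  (forall y, c < y -> fle (ftop L) (Up v y)) -> forall x, c <= x -> fle (Lo v x) (fbot L).
Proof.
move=> Up_top x cx.
apply: fle_trans (proj1 (Lo_rounded _ _)) _; apply: supfam_lub => -[x' xx'] /=.
apply: fle_trans (proj1 (Lo_rounded _ _)) _; apply: supfam_lub => -[x'' x'x''] /=.
apply: fle_trans _ (FUN_disjoint v x'x''); apply: fmeet_glb; first exact: fle_refl.
exact: fle_trans (ftop_max _) (Up_top _ (le_lt_trans cx xx')).
Qed.

Lemma Up_bot_below v (c : rat) :
  (forall y, y < c -> fle (ftop L) (Lo v y)) -> forall x, x <= c -> fle (Up v x) (fbot L).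
Proof.
move=> Lo_top x xc.
apply: fle_trans (proj1 (Up_rounded _ _)) _; apply: supfam_lub => -[x' x'x] /=.
apply: fle_trans (proj1 (Up_rounded _ _)) _; apply: supfam_lub => -[x'' x''x'] /=.
apply: fle_trans _ (FUN_disjoint v x''x'); apply: fmeet_glb; last exact: fle_refl.
exact: fle_trans (ftop_max _) (Lo_top _ (lt_le_trans x'x xc)).
Qed.

Lemma FUN_value v (c : rat) :
  (forall x, c <= x -> fle (Lo v x) (fbot L)) ->
  (forall x, x <= c -> fle (Up v x) (fbot L)) ->
  (forall b, feq (Lo v b) (fbool L (b < c))) /\ (forall b, feq (Up v b) (fbool L (c < b))).
Proof.
move=> Lo_bot Up_bot; split=> b; apply: feq_fbool; rewrite -?leNgt.
- move=> bc; apply: fle_trans (FUN_located v bc) _.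
  by apply: fjoin_lub (fle_refl _) (fle_trans (Up_bot _ (lexx c)) (fbot_min _)).
- exact: Lo_bot.
- move=> cb; apply: fle_trans (FUN_located v cb) _.
  by apply: fjoin_lub (fle_trans (Lo_bot _ (lexx c)) (fbot_min _)) (fle_refl _).
- exact: Up_bot.
Qed.

(* The constant c has integral c.  Write c = (m+1)/(n+1); the integer case
   follows from I(u) = 1 by additivity, then (n+1) (c u) = (m+1) u. *)
Lemma FUN_const_pos (c : rat) : 0 < c ->
  (forall b, feq (Lo (c *: u) b) (fbool L (b < c))) /\
  (forall b, feq (Up (c *: u) b) (fbool L (c < b))).
Proof.
move=> /rat_pos_frac [m [n cnm]].
have m_gt0 : (0 : rat) < m.+1%:R by rewrite ltr0n.
have Lo_mu y : y < m.+1%:R -> fle (ftop L) (Lo (m.+1%:R *: u) y).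
  move=> ym; have y_lt1 : y / m.+1%:R < 1 by rewrite ltr_pdivrMr // mul1r.
  have [_ Lo_top] := Lo_unit (y / m.+1%:R); rewrite y_lt1 in Lo_top.
  apply: fle_trans Lo_top (fle_trans (Lo_mulSn m _ _) _).
  by rewrite mulrCA divff ?mulr1 ?gt_eqF //; apply: fle_refl.
have Up_mu y : m.+1%:R < y -> fle (ftop L) (Up (m.+1%:R *: u) y).
  move=> my; have y_gt1 : 1 < y / m.+1%:R by rewrite ltr_pdivlMr // mul1r.
  have [_ Up_top] := Up_unit (y / m.+1%:R); rewrite y_gt1 in Up_top.
  apply: fle_trans Up_top (fle_trans (Up_mulSn m _ _) _).
  by rewrite mulrCA divff ?mulr1 ?gt_eqF //; apply: fle_refl.
have n_cu : n.+1%:R *: (c *: u) = m.+1%:R *: u by rewrite scalerA mulrC cnm.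
apply: FUN_value => x cx.
- apply: fle_trans (Lo_mulSn n _ _) _; rewrite n_cu.
  by apply: (Lo_bot_above Up_mu); rewrite -cnm mulrC ler_pM2l.
- apply: fle_trans (Up_mulSn n _ _) _; rewrite n_cu.
  by apply: (Up_bot_below Lo_mu); rewrite -cnm mulrC ler_pM2r.
Qed.

Lemma FUN_const (c : rat) :
  (forall b, feq (Lo (c *: u) b) (fbool L (b < c))) /\
  (forall b, feq (Up (c *: u) b) (fbool L (c < b))).
Proof.
case: (ltgtP c 0) => [c_lt0 | c_gt0 | ->]; last by
  rewrite scale0r; split; [apply: Lo_zero | apply: Up_zero].
- have Nc_gt0 : 0 < - c by rewrite oppr_gt0.
  have [Lo_c Up_c] := FUN_const_pos Nc_gt0.
  have -> : c *: u = - ((- c) *: u) by rewrite scaleNr opprK.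
  split=> b.
  + by apply: feq_trans (Lo_opp _ _) _; rewrite -ltrN2; apply: Up_c.
  + have := Lo_opp (- ((- c) *: u)) (- b); rewrite !opprK => Lo_Up.
    by apply: feq_trans (feq_sym Lo_Up) _; rewrite -ltrN2; apply: Lo_c.
- exact: FUN_const_pos.
Qed.

Lemma Lo_shift f (c : rat) : feq (Lo (f + c *: u) 0) (Lo f (- c)).
Proof.
have [Lo_c _] := FUN_const c.
split.
- apply: fle_trans (proj1 (Lo_add _ _ _)) _; apply: supfam_lub => -[[a b] /= ab0].
  have -> : a = - b by apply/eqP; rewrite -addr_eq0 ab0.
  case: (ltP b c) => [bc | cb].
  + by apply: fle_trans (fmeet_l _ _) (Lo_le _ _); rewrite lerN2 ltW.
  + have [Lo_bot _] := Lo_c b; rewrite ltNge cb in Lo_bot.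
    exact: fle_trans (fmeet_r _ _) (fle_trans Lo_bot (fbot_min _)).
- apply: fle_trans (proj1 (Lo_rounded _ _)) _; apply: supfam_lub => -[a ca] /=.
  rewrite -(addrN a); apply: fle_trans (Lo_meet_add f (c *: u) a (- a)).
  apply: fmeet_glb; first exact: fle_refl.
  have [_ Lo_top] := Lo_c (- a); rewrite ltrNl ca in Lo_top.
  exact: fle_trans (ftop_max _) Lo_top.
Qed.

Lemma FUN_INT (HR : is_riesz le) : INT_model le u (FUN_to_INT Lo).
Proof.
rewrite /INT_model /FUN_to_INT.
split; first by have := Lo_unit 0; rewrite ltr01.
split.
  move=> f; apply: feq_bot; apply: fle_trans (Lo_meet_add _ _ _ _) _.
  by rewrite addrN addr0; apply: (proj1 (Lo_zero 0)).
split.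
  move=> f g; apply: fle_trans (proj1 (Lo_add _ _ _)) _.
  apply: supfam_lub => -[[a b] /= ab0].
  case: (leP 0 a) => [a_ge0 | a_lt0].
  + exact: fle_trans (fmeet_l _ _) (fle_trans (Lo_le _ a_ge0) (fjoin_l _ _)).
  + have b_ge0 : 0 <= b by lra.
    exact: fle_trans (fmeet_r _ _) (fle_trans (Lo_le _ b_ge0) (fjoin_r _ _)).
split.
  move=> f f_le0; apply: feq_bot.
  apply: fle_trans (proj1 (Lo_rounded _ _)) _; apply: supfam_lub => -[p p_gt0] /=.
  have Nf_ge0 : le 0 (- f) by move: (rle_addr HR (- f) f_le0); rewrite add0r subrr.
  have Lo_Nf : fle (ftop L) (Lo (- f) (- p)).
    have Np_lt0 : - p < 0 by rewrite oppr_lt0.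
    apply: fle_trans (FUN_located _ Np_lt0) _.
    exact: fjoin_lub (fle_refl _) (fle_trans (Up_pos Nf_ge0) (fbot_min _)).
  apply: fle_trans _ (proj1 (Lo_zero 0)); rewrite -(addrN f) -(addrN p).
  apply: fle_trans (Lo_meet_add _ _ _ _); apply: fmeet_glb; first exact: fle_refl.
  exact: fle_trans (ftop_max _) Lo_Nf.
move=> f; apply: feq_trans (Lo_rounded f 0) _; apply: supfam_feq => -[s s_gt0] /=.
apply: feq_sym; rewrite -scaleNr; apply: feq_trans (Lo_shift _ _) _.
by rewrite opprK; apply: feq_refl.
Qed.

Lemma FUN_roundtrip f (p : rat) :
  feq (INT_to_FUN_Lo u (FUN_to_INT Lo) f p) (Lo f p) /\
  feq (INT_to_FUN_Up u (FUN_to_INT Lo) f p) (Up f p).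
Proof.
rewrite /FUN_to_INT /INT_to_FUN_Lo /INT_to_FUN_Up; split.
- by rewrite -scaleNr; apply: feq_trans (Lo_shift _ _) _; rewrite opprK; apply: feq_refl.
- rewrite addrC; apply: feq_trans (Lo_shift _ _) _.
  by have := Lo_opp f (- p); rewrite opprK.
Qed.
End FunModel.

Lemma int_to_ZE (z : int) : IZR (int_to_Z z) = z%:~R :> R.
Proof.
by case: z => n; rewrite /int_to_Z ?opp_IZR -INR_IZR_INZ INRE // NegzE mulrNz.
Qed.

Lemma rat_to_RE (q : rat) : rat_to_R q = ratr q.
Proof. by rewrite /rat_to_R RdivE !int_to_ZE. Qed.

(* By density of Q, a real number is determined by its lower rational cut. *)
Lemma real_eq_of_cuts (x y : R) :
  (forall q : rat, ratr q < x <-> ratr q < y) -> x = y.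
Proof.
move=> cuts; case: (ltgtP x y) => // [xy|yx]; exfalso.
- have [q] := rat_in_itvoo xy; rewrite in_itv /= => /andP[xq qy].
  by move: xq; rewrite ltNge ltW //; apply/(cuts q).
- have [q] := rat_in_itvoo yx; rewrite in_itv /= => /andP[yq qx].
  by move: yq; rewrite ltNge ltW //; apply/(cuts q).
Qed.

Section DedekindCut.
Variable C : rat -> Prop.
Hypothesis C_down : forall q q', q' <= q -> C q -> C q'.
Hypothesis C_open : forall q, C q -> exists2 q', q < q' & C q'.
Hypothesis C_inhabited : exists q, C q.
Hypothesis C_bounded : exists q, ~ C q.

Local Open Scope classical_set_scope.
Definition cut_set : set R := [set ratr q | q in C].
Definition cut_value : R := sup cut_set.

Let below_outside q q' : ~ C q -> C q' -> q' < q.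
Proof. by move=> Cq Cq'; rewrite ltNge; apply/negP => /C_down/(_ Cq'). Qed.

Lemma cut_valueP q : C q <-> ratr q < cut_value.
Proof.
have [qb Cqb] := C_bounded; have [q0 Cq0] := C_inhabited.
have supE : has_sup cut_set.
  split; first by exists (ratr q0), q0.
  by exists (ratr qb) => _ [q' Cq' <-]; rewrite ler_rat ltW // (below_outside Cqb).
split=> [Cq | qlt].
- have [q' qq' Cq'] := C_open Cq.
  apply: (@lt_le_trans _ _ (ratr q')); first by rewrite ltr_rat.
  by apply: sup_upper_bound => //; exists q'.
- apply: NNPP => Cq; move: qlt; apply/negP; rewrite -leNgt.
  apply: ge_sup; first by exists (ratr q0), q0.
  by move=> _ [q' Cq' <-]; rewrite ler_rat ltW // (below_outside Cq).
Qed.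
End DedekindCut.

Lemma additive_scale (V : lmodType rat) (F : numFieldType) (I : V -> F) :
  (forall f g, I (f + g) = I f + I g) -> forall (r : rat) f, I (r *: f) = ratr r * I f.
Proof.
move=> Iadd r f.
have I0 : I 0 = 0 by apply: (addIr (I 0)); rewrite -Iadd addr0 add0r.
have IN g : I (- g) = - I g by apply/eqP; rewrite -addr_eq0 -Iadd addNr I0.
have IMn g n : I (g *+ n) = I g *+ n.
  by elim: n => [|n IH]; rewrite ?mulr0n ?I0 // !mulrS Iadd IH.
have IMz g (z : int) : I (g *~ z) = I g *~ z.
  by case: z => n; [exact: IMn | rewrite NegzE !mulrNz IN IMn].
have E : (denq r)%:~R *: (r *: f) = (numq r)%:~R *: f by rewrite scalerA mulrC -numqE.
have dq0 : (denq r)%:~R != 0 :> F by rewrite intr_eq0 denq_neq0.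
have := congr1 I E; rewrite !scaler_int !IMz => IE.
by apply: (mulIf dq0); rewrite mulrzr IE /ratr mulrAC divfK // mulrC mulrzr.
Qed.

Lemma PF_supfam (I : Type) (F : I -> Prop) : @supfam PropFrame I F <-> exists i, F i.
Proof.
split; first by move=> [_ [[i ->] Fi]]; exists i.
by move=> [i Fi]; exists (F i); split=> //; exists i.
Qed.

Lemma PF_join (a b : Prop) : @fjoin PropFrame a b <-> a \/ b.
Proof.
split; first by move=> [_ [[->|->] h]]; [left | right].
by move=> [h|h]; [exists a | exists b]; split=> //; [left | right].
Qed.

Lemma Rlt0E (x : R) : Rlt 0 x <-> 0 < x.
Proof. by split=> /RltP. Qed.

Section Integrals.
Variables (V : lmodType rat) (le : V -> V -> Prop) (u : V) (I : V -> R).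
Hypothesis HI : is_integral le u I.

Lemma integralD f g : I (f + g) = I f + I g.
Proof. by case: HI. Qed.

Lemma integralZ (r : rat) f : I (r *: f) = ratr r * I f.
Proof. by case: HI => _ [IZ _]; rewrite IZ rat_to_RE. Qed.

Lemma integral_ge0 f : le 0 f -> 0 <= I f.
Proof. by case: HI => _ [_ [Ipos _]] /Ipos /RleP. Qed.

Lemma integral_unit : I u = 1.
Proof. by case: HI => _ [_ [_ ->]]. Qed.

Lemma integralN f : I (- f) = - I f.
Proof. by rewrite -scaleN1r integralZ rmorphN1 mulN1r. Qed.

Lemma integral_shift f (q : rat) : I (f - q *: u) = I f - ratr q.
Proof. by rewrite integralD integralN integralZ integral_unit mulr1. Qed.

Lemma integral_point (HR : is_riesz le) :
  INT_model le u (L := PropFrame) (fun f => Rlt 0 (I f)).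
Proof.
split; first by split=> //= _; apply/Rlt0E; rewrite integral_unit ltr01.
split.
  move=> f; split=> //= -[/Rlt0E If_gt0 /Rlt0E]; rewrite integralN oppr_gt0.
  by rewrite ltNge ltW.
split.
  move=> f g /= /Rlt0E; rewrite integralD => sum_gt0; apply/PF_join.
  by have [If_le0 | If_gt0] := leP (I f) 0; [right | left]; apply/Rlt0E => //; lra.
split.
  move=> f f_le0; split=> //= /Rlt0E If_gt0.
  have Nf_ge0 : le 0 (- f) by move: (rle_addr HR (- f) f_le0); rewrite add0r subrr.
  have := integral_ge0 Nf_ge0.
  by rewrite integralN oppr_ge0 leNgt If_gt0.
move=> f; split=> /=.
- move/Rlt0E=> If_gt0; have [q] := rat_in_itvoo If_gt0; rewrite in_itv /= => /andP [q_gt0 qI].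
  have q_pos : 0 < q by rewrite -(ltr_rat R) rmorph0.
  apply/PF_supfam; exists (exist _ q q_pos) => /=.
  by apply/Rlt0E; rewrite integral_shift subr_gt0.
- move/PF_supfam => [[s s_gt0] /=] /Rlt0E; rewrite integral_shift subr_gt0 => sI.
  apply/Rlt0E; apply: lt_trans sI; by rewrite -(rmorph0 (@ratr R)) ltr_rat.
Qed.

End Integrals.

Lemma integral_unique (V : lmodType rat) (le : V -> V -> Prop) (u : V)
    (I J : V -> R) :
  is_integral le u I -> is_integral le u J ->
  (forall f, Rlt 0 (I f) <-> Rlt 0 (J f)) -> forall f, I f = J f.
Proof.
move=> HI HJ IJ f; apply: real_eq_of_cuts => q.
have [IJq JIq] := IJ (f - q *: u).
rewrite (integral_shift HI f q) (integral_shift HJ f q) in IJq JIq.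
by rewrite -[_ < I f]subr_gt0 -[_ < J f]subr_gt0; split=> [/Rlt0E/IJq | /Rlt0E/JIq] /Rlt0E.
Qed.

Section Points.
Variables (V : lmodType rat) (le : V -> V -> Prop) (u : V).
Hypotheses (HR : is_riesz le) (Hu : strong_unit le u).
Variable P : V -> Prop.
Hypothesis HP : INT_model le u (L := PropFrame) P.

Let HF : FUN_model le u
  (INT_to_FUN_Lo (L := PropFrame) u P) (INT_to_FUN_Up (L := PropFrame) u P) :=
  INT_FUN HR Hu HP.

Definition point_value f : R := cut_value (fun q => P (f - q *: u)).

Lemma point_valueP f (q : rat) : P (f - q *: u) <-> ratr q < point_value f.
Proof.
apply: cut_valueP.
- by move=> q1 q2 q21; apply: (Lo_le HF).
- move=> q1 /(proj1 (Lo_rounded HF f q1)) /PF_supfam [[q2 q12] Pq2].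
  by exists q2.
- by have [p top_p] := P_top_below HR Hu HP f; exists p; apply: top_p.
- by have [qb bot_q] := P_bot_above HR Hu HP f; exists qb; apply: bot_q.
Qed.

Lemma point_valueE f : P f <-> 0 < point_value f.
Proof. by rewrite -(rmorph0 (@ratr R)) -point_valueP scale0r subr0. Qed.

Lemma point_valueD f g : point_value (f + g) = point_value f + point_value g.
Proof.
apply: real_eq_of_cuts => r; rewrite -point_valueP.
have [split_sum merge_sum] := Lo_add HF f g r.
split.
- move=> /split_sum /PF_supfam [[[a b] /= ab_r] [/point_valueP fa /point_valueP gb]].
  by rewrite -ab_r rmorphD ltrD.
- move=> r_lt; have : ratr r - point_value g < point_value f by lra.
  move=> /rat_in_itvoo [q]; rewrite in_itv /= => /andP [rq qf].
  have e : (q, r - q).1 + (q, r - q).2 = r by rewrite /= subrKC.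
  apply: merge_sum; apply/PF_supfam; exists (exist _ (q, r - q) e).
  by split; apply/point_valueP => //=; rewrite rmorphB; lra.
Qed.

Lemma point_value_ge0 f : le 0 f -> 0 <= point_value f.
Proof.
move=> f_ge0; rewrite leNgt; apply/negP => /rat_in_itvoo [q].
rewrite in_itv /= => /andP [fq q_lt0].
have q_neg : q < 0 by rewrite -(ltr_rat R) rmorph0.
have /PF_join [/point_valueP | ] := FUN_located HF f q_neg Logic.I.
- by rewrite ltNge ltW.
- exact (Up_pos HF f_ge0).
Qed.

Lemma point_value_unit : point_value u = 1.
Proof.
apply: real_eq_of_cuts => q; rewrite -point_valueP -(rmorph1 (@ratr R)) ltr_rat.
have [Lo_u u_Lo] := Lo_unit HF q.
by split=> [/Lo_u | q_lt1]; [case: (q < 1) | apply: u_Lo; rewrite q_lt1].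
Qed.

Lemma point_value_integral : is_integral le u point_value.
Proof.
split; first exact: point_valueD.
split; first by move=> r f; rewrite rat_to_RE; exact: additive_scale point_valueD r f.
split; first by move=> f /point_value_ge0 /RleP.
exact: point_value_unit.
Qed.

End Points.

Theorem lemma3p4 (V : lmodType rat) (le : V -> V -> Prop) (u : V)
  (HR : is_riesz le) (Hu : strong_unit le u) :
  (forall L : frame,
     (* INT -> FUN interpretation sends models to models *)
     (forall P : V -> L, INT_model le u P ->
        FUN_model le u (INT_to_FUN_Lo u P) (INT_to_FUN_Up u P)) /\
     (* FUN -> INT interpretation sends models to models *)
     (forall Lo Up : V -> rat -> L, FUN_model le u Lo Up ->
        INT_model le u (FUN_to_INT Lo)) /\
     (* mutually inverse *)
     (forall P : V -> L, INT_model le u P ->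
        forall f, feq (FUN_to_INT (INT_to_FUN_Lo u P) f) (P f)) /\
     (forall Lo Up : V -> rat -> L, FUN_model le u Lo Up ->
        forall f (p : rat),
          feq (INT_to_FUN_Lo u (FUN_to_INT Lo) f p) (Lo f p) /\
          feq (INT_to_FUN_Up u (FUN_to_INT Lo) f p) (Up f p))) /\
  (* points of INT correspond exactly to integrals *)
  (forall P : V -> Prop, INT_model le u (L := PropFrame) P ->
     exists I : V -> R, is_integral le u I /\
       forall f, P f <-> Rlt 0%R (I f)) /\
  (forall I J : V -> R, is_integral le u I -> is_integral le u J ->
     (forall f, Rlt 0%R (I f) <-> Rlt 0%R (J f)) -> forall f, I f = J f) /\
  (forall I : V -> R, is_integral le u I ->
     INT_model le u (L := PropFrame) (fun f => Rlt 0%R (I f))).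
Proof.
split.
  move=> L; split; first by move=> P HP; exact (INT_FUN HR Hu HP).
  split; first by move=> Lo Up HF; exact (FUN_INT HF HR).
  split; last by move=> Lo Up HF; exact (FUN_roundtrip HF).
  by move=> P _ f; apply: INT_roundtrip.
split.
  move=> P HP; exists (point_value u P); split; first exact (point_value_integral HR Hu HP).
  by move=> f; rewrite (point_valueE HR Hu HP) Rlt0E.
split; first exact: integral_unique.
by move=> I HI; exact (integral_point HI HR).
Qed.
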